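(* Let $\sim$ (for each $N$) be an equivalence relation on $\{1,\dots,N\}^2$ with $(p,q)\sim(q,p)$ satisfying conditions (C1), (C2), (C3). Let $k$ be even and let $\pi$ be a crossing pair-partition of $\{1,\dots,k\}$. Then $$\frac{1}{N^{k/2+1}}\,\#\mathcal E^{(N)}_k(\pi)\xrightarrow{N\to\infty}0.$$
   Context: Conditions on $\sim$ (as $N\to\infty$): (C1) $\max_p\#\{(q,r,s)\in\{1,\dots,N\}^3:(p,q)\sim(r,s)\}=o(N^2)$; (C2) $\max_{p,q,r}\#\{s:(p,q)\sim(r,s)\}\le B<\infty$ with $B$ independent of $N$; (C3) $\#\{(p,q,r)\in\{1,\dots,N\}^3:(p,q)\sim(q,r),\ r\neq p\}=o(N^2)$. A pair-partition of $\{1,\dots,k\}$ is a partition all of whose blocks have exactly two elements; it is crossing if there exist $1\le a<b<c<d\le k$ with $\{a,c\},\{b,d\}\in\pi$. For a partition $\pi$ of $\{1,\dots,k\}$, $\mathcal E^{(N)}_k(\pi)$ is the set of $i=(i_1,\dots,i_k)\in\{1,\dots,N\}^k$ such that, with $i_{k+1}:=i_1$, for all $l,m$: $l,m$ lie in the same block of $\pi$ iff $(i_l,i_{l+1})\sim(i_m,i_{m+1})$. *)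

From mathcomp Require Import all_boot.
Set Implicit Arguments. Unset Strict Implicit. Unset Printing Implicit Defensive.

(* Indices {1,...,N} are represented by 'I_N = {0,...,N-1}. *)
Definition pair_rel (N : nat) := rel ('I_N * 'I_N).

(* g = o(f) for nonnegative integer sequences with f > 0 eventually:
   g N / f N -> 0, i.e. for every eps = 1/(m+1) > 0, eventually (m+1) g N <= f N. *)
Definition little_o (g f : nat -> nat) : Prop :=
  forall m : nat, exists N0 : nat, forall N : nat, N0 <= N -> m.+1 * g N <= f N.

Definition is_equivalence {T : Type} (r : rel T) : Prop :=
  [/\ reflexive r, symmetric r & transitive r].

Definition C1_count (sim : forall N, pair_rel N) (N : nat) : nat :=
  \max_(p : 'I_N)
     #|[set x : 'I_N * 'I_N * 'I_N | sim N (p, x.1.1) (x.1.2, x.2)]|.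

Definition C2_count (sim : forall N, pair_rel N) (N : nat) (p q r : 'I_N) : nat :=
  #|[set s : 'I_N | sim N (p, q) (r, s)]|.

Definition C3_count (sim : forall N, pair_rel N) (N : nat) : nat :=
  #|[set x : 'I_N * 'I_N * 'I_N | sim N (x.1.1, x.1.2) (x.1.2, x.2) && (x.2 != x.1.1)]|.

Definition pair_partition (k : nat) (P : {set {set 'I_k}}) : Prop :=
  partition P [set: 'I_k] /\ forall B, B \in P -> #|B| = 2.

Definition crossing (k : nat) (P : {set {set 'I_k}}) : Prop :=
  exists a b c d : 'I_k,
    [/\ a < b, b < c, c < d, [set a; c] \in P & [set b; d] \in P].

Definition same_block (k : nat) (P : {set {set 'I_k}}) (l m : 'I_k) : bool :=
  [exists B in P, (l \in B) && (m \in B)].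

(* E_k^(N)(pi): multi-indices i with cyclic convention i_{k+1} = i_1 (ordS) *)
Definition E_set (sim : forall N, pair_rel N) (N k : nat) (P : {set {set 'I_k}})
  : {set {ffun 'I_k -> 'I_N}} :=
  [set i : {ffun 'I_k -> 'I_N} |
     [forall l : 'I_k, forall m : 'I_k,
        same_block P l m == sim N (i l, i (ordS l)) (i m, i (ordS m))]].

From mathcomp Require Import all_boot zify.
Set Implicit Arguments. Unset Strict Implicit. Unset Printing Implicit Defensive.

(* Fix a crossing a < b < c < d with {a,c} and {b,d} blocks of pi, and count the
   restrictions of E_k(pi) to a growing set D of positions.  Start from
   D = {a, a+1, c, c+1}: there are at most N * C1(N) choices, since
   (i_a, i_(a+1)) ~ (i_c, i_(c+1)).  Then repeatedly add a neighbour t of D across an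
   edge (j, j+1) with j <> b, d and one endpoint already in D.  If the block of j was
   already met by a processed edge (m, m+1), the relation (i_j, i_(j+1)) ~ (i_m, i_(m+1))
   and (C2) leave at most B values for i_t; otherwise we pay a factor N, but only once
   per block, and never for {b, d}.  Such an edge exists until D is everything, because
   cutting the cycle at b and d leaves two arcs, containing a and c respectively.  Hence
   #E_k(pi) <= C1(N) N^(k/2 - 1) B^k = o(N^(k/2 + 1)) by (C1). *)

Lemma leq_card_bigcup (I T : finType) (A : {set I}) (F : I -> {set T}) :
  #|\bigcup_(i in A) F i| <= \sum_(i in A) #|F i|.
Proof.
elim/big_rec2: _ => [|i m B _ IH]; first by rewrite cards0.
exact: leq_trans (leq_card_setU _ _).1 (leq_add (leqnn _) IH).
Qed.

Lemma card_imset_factor_le (aT rT vT : finType) (f : aT -> rT) (h : aT -> vT)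
    (A : {set aT}) (W : {set vT}) :
  {in A &, forall x y, h x = h y -> f x = f y} -> {in A, forall x, h x \in W} ->
  #|f @: A| <= #|W|.
Proof.
move=> hf hW; have [->|[x0 x0A]] := set_0Vmem A; first by rewrite imset0 cards0.
pose g v := f (odflt x0 [pick x in A | h x == v]).
have sub : f @: A \subset g @: W.
  apply/subsetP => _ /imsetP [x xA ->]; apply/imsetP; exists (h x); first exact: hW.
  rewrite /g; case: pickP => [y /andP [yA /eqP hyx]|/(_ x)]; first exact: hf.
  by rewrite xA eqxx.
exact: leq_trans (subset_leq_card sub) (leq_imset_card _ _).
Qed.

Section Restriction.
Variables I R : finType.
Implicit Types (D T : {set I}) (f g : {ffun I -> R}) (A : {set {ffun I -> R}}).

Definition restrict D f : {ffun I -> option R} :=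
  [ffun x => if x \in D then Some (f x) else None].

Lemma eq_restrict D f g : {in D, f =1 g} -> restrict D f = restrict D g.
Proof. by move=> eqfg; apply/ffunP => x; rewrite !ffunE; case: ifP => // /eqfg ->. Qed.

Lemma restrict_eq_in D f g : restrict D f = restrict D g -> {in D, f =1 g}.
Proof. by move=> /ffunP eqfg x xD; have := eqfg x; rewrite !ffunE xD => -[]. Qed.

Lemma card_restrict_le (V : finType) A T (h : {ffun I -> R} -> V) (W : {set V}) :
  {in A &, forall f g, h f = h g -> {in T, f =1 g}} -> {in A, forall f, h f \in W} ->
  #|restrict T @: A| <= #|W|.
Proof.
by move=> hT; apply: card_imset_factor_le => f g fA gA /hT-/(_ fA gA)/eq_restrict.
Qed.

Lemma card_restrict1_le A t (W : {set R}) :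
  {in A, forall f, f t \in W} -> #|restrict [set t] @: A| <= #|W|.
Proof. by apply: card_restrict_le => f g _ _ eqfg x /set1P ->. Qed.

Lemma card_restrict1_leT A t : #|restrict [set t] @: A| <= #|R|.
Proof. by rewrite -cardsT; apply: card_restrict1_le => f; rewrite inE. Qed.

Lemma card_restrict_setU A D T M :
  {in A, forall f0, #|restrict T @: [set f in A | restrict D f == restrict D f0]| <= M} ->
  #|restrict (D :|: T) @: A| <= M * #|restrict D @: A|.
Proof.
move=> fiber_le.
pose glue (r s : {ffun I -> option R}) := [ffun x => if x \in D then r x else s x].
pose fiber r := restrict T @: [set f in A | restrict D f == r].
have sub : restrict (D :|: T) @: A \subset
           \bigcup_(r in restrict D @: A) [set glue r s | s in fiber r].
  apply/subsetP => _ /imsetP [f fA ->]; apply/bigcupP; exists (restrict D f).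
    exact: imset_f.
  apply/imsetP; exists (restrict T f); first by apply: imset_f; rewrite inE fA /=.
  by apply/ffunP => x; rewrite !ffunE inE; case: (x \in D).
apply: leq_trans (subset_leq_card sub) (leq_trans (leq_card_bigcup _ _) _).
rewrite mulnC -sum_nat_const; apply: leq_sum => _ /imsetP [f0 f0A ->].
exact: leq_trans (leq_imset_card _ _) (fiber_le f0 f0A).
Qed.

End Restriction.

Lemma nat_interval_const (p : nat -> bool) x y :
  (forall n, x <= n < y -> p n = p n.+1) -> forall n, x <= n <= y -> p n = p x.
Proof.
move=> step; elim=> [|n IH] /andP [xn ny]; first by have -> : x = 0 by lia.
have [xn'|nx] := leqP x n; last by have -> : x = n.+1 by lia.
by rewrite -step ?IH //; lia.
Qed.

Lemma inord_overflow k : (inord k.+1 : 'I_k.+1) = ord0.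
Proof. by rewrite /inord /insubd insubF //= ltnn. Qed.

Lemma ordS_inord k n : n <= k -> ordS (inord n : 'I_k.+1) = inord n.+1.
Proof.
move=> nk; apply: val_inj; rewrite /= [n in n.+1 %% _]inordK; last by lia.
case: (ltnP n k) => [lt_nk|ge_nk]; first by rewrite modn_small // inordK.
have -> : n = k by lia.
by rewrite modnn inord_overflow.
Qed.

(* A set of cyclic positions whose membership can only change when stepping out of
   [b] or [d] is a union of the two arcs (d, b] and (b, d]; it is everything as soon
   as it meets both arcs. *)
Lemma cyclic_arcs_full k (D : {set 'I_k}) (a b c d : 'I_k) :
  a < b -> b < c -> c < d -> a \in D -> c \in D ->
  (forall j, j \notin [set b; d] -> (j \in D) = (ordS j \in D)) -> D = setT.
Proof.
case: k => [|k] in D a b c d *; first by case: a.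
move=> ab bc cd aD cD step.
pose p n := (inord n : 'I_k.+1) \in D.
have pE (x : 'I_k.+1) : p x = (x \in D) by rewrite /p inord_val.
have pS n : n <= k -> n != b -> n != d -> p n = p n.+1.
  move=> nk nb nd; rewrite /p -ordS_inord // step // !inE.
  by rewrite -!val_eqE /= inordK ?nb ?nd //; lia.
have pk : p k.+1 = p 0 by rewrite /p inord_overflow -[ord0]inord_val.
have hb := ltn_ord b; have hd := ltn_ord d.
have arc1 : forall n, 0 <= n <= b -> p n = p 0.
  by apply: nat_interval_const => n ?; apply: pS; lia.
have arc2 : forall n, b < n <= d -> p n = p b.+1.
  by apply: nat_interval_const => n ?; apply: pS; lia.
have arc3 : forall n, d < n <= k.+1 -> p n = p d.+1.
  by apply: nat_interval_const => n ?; apply: pS; lia.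
have p0 : p 0 by rewrite -(arc1 a) ?pE //; lia.
have pb1 : p b.+1 by rewrite -(arc2 c) ?pE //; lia.
have pd1 : p d.+1 by rewrite -(arc3 k.+1) ?pk //; lia.
apply/setP => z; rewrite inE -pE; have hz := ltn_ord z.
case: (leqP z b) => [zb|bz]; first by rewrite arc1.
case: (leqP z d) => [zd|dz]; first by rewrite arc2 //; lia.
by rewrite arc3 //; lia.
Qed.

Lemma same_blockE k (P : {set {set 'I_k}}) l m :
  partition P [set: 'I_k] -> same_block P l m = (pblock P l == pblock P m).
Proof.
move=> partP; have tiP : trivIset P by case/and3P: partP.
have lP : l \in cover P by rewrite (cover_partition partP) inE.
rewrite eq_pblock //; apply/existsP/idP => [[B /and3P [BP lB mB]]|mPl].
  by rewrite (def_pblock tiP BP lB).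
by exists (pblock P l); rewrite pblock_mem // mem_pblock lP.
Qed.

Lemma card_pair_partition k (P : {set {set 'I_k}}) :
  pair_partition P -> #|P|.*2 = k.
Proof.
case=> partP card2; rewrite -[RHS]card_ord -cardsT (card_partition partP).
by rewrite (eq_bigr (fun=> 2)) // sum_nat_const muln2.
Qed.

Section CrossingBound.
Local Unset Implicit Arguments.
Variables (sim : forall N : nat, pair_rel N) (N k B : nat).
Local Notation "u ~ v" := (sim N u v) (at level 70).
Hypothesis sim_trans : transitive (sim N).
Hypothesis sim_swap : forall p q : 'I_N, (p, q) ~ (q, p).
Hypothesis C2_le : forall p q r : 'I_N, C2_count sim p q r <= B.
Hypotheses (N_gt0 : 0 < N) (B_gt0 : 0 < B).
Variable P : {set {set 'I_k}}.
Hypothesis partP : partition P [set: 'I_k].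
Variables a b c d : 'I_k.
Hypotheses (ab : a < b) (bc : b < c) (cd : c < d).
Hypotheses (acP : [set a; c] \in P) (bdP : [set b; d] \in P).

Local Notation S := (E_set sim N P).
Local Notation C := (C1_count sim N).
Local Notation fiber D f0 := [set f in S | restrict D f == restrict D f0].

Lemma E_set_sim f l m : f \in S -> pblock P l = pblock P m ->
  (f l, f (ordS l)) ~ (f m, f (ordS m)).
Proof.
rewrite inE => /forallP /(_ l) /forallP /(_ m) /eqP <- eq_lm.
by rewrite same_blockE // eq_lm.
Qed.

Lemma card_restrict1_le_N (A : {set {ffun 'I_k -> 'I_N}}) t :
  #|restrict [set t] @: A| <= N.
Proof. by have := card_restrict1_leT A t; rewrite card_ord. Qed.

Lemma card_fiber_le_B (D : {set 'I_k}) u t m f0 :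
  f0 \in S -> u \in D -> m \in D -> ordS m \in D ->
  {in S, forall f : {ffun 'I_k -> 'I_N}, (f m, f (ordS m)) ~ (f u, f t)} ->
  #|restrict [set t] @: fiber D f0| <= B.
Proof.
move=> f0S uD mD smD sim_ut.
apply: leq_trans (C2_le (f0 m) (f0 (ordS m)) (f0 u)).
apply: card_restrict1_le => f /setIdP [fS /eqP /restrict_eq_in eqD].
by rewrite inE -(eqD u) // -(eqD m) // -(eqD (ordS m)) // sim_ut.
Qed.

(* [U] lists processed edges (j, j+1) inside [D]; the factor [N] is paid once for each
   block they meet. *)
Definition partial_bound (D U : {set 'I_k}) :=
  [/\ a \in D, c \in D, [set b; d] \notin pblock P @: U,
      {in U, forall j, (j \in D) && (ordS j \in D)} &
      #|restrict D @: S| <= C * N ^ #|pblock P @: U| * B ^ #|D| ].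

Lemma trivIset_P : trivIset P.
Proof. by case/and3P: partP. Qed.

Lemma mem_cover_P j : j \in cover P.
Proof. by rewrite (cover_partition partP) inE. Qed.

Lemma pblock_a : pblock P a = [set a; c].
Proof. by rewrite (def_pblock trivIset_P acP) // !inE eqxx. Qed.

Lemma pblock_c : pblock P c = [set a; c].
Proof. by rewrite (def_pblock trivIset_P acP) // !inE eqxx orbT. Qed.

Lemma card_fiber_le_C f0 : f0 \in S ->
  #|restrict [set ordS a; c; ordS c] @: fiber [set a] f0| <= C.
Proof.
move=> f0S; pose h (f : {ffun 'I_k -> 'I_N}) := (f (ordS a), f c, f (ordS c)).
apply: (@leq_trans #|[set x : 'I_N * 'I_N * 'I_N | (f0 a, x.1.1) ~ (x.1.2, x.2)]|).
  apply: (card_restrict_le (h := h)) => [f g _ _ [eq1 eq2 eq3] x|f].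
    by rewrite !inE => /orP [/orP [] | ] /eqP ->.
  case/setIdP => fS /eqP /restrict_eq_in eq_a; rewrite inE /= -(eq_a a) ?inE //.
  by apply: E_set_sim; rewrite // pblock_a pblock_c.
exact: (leq_bigmax (f0 a)).
Qed.

Lemma partial_bound_init : partial_bound [set a; ordS a; c; ordS c] [set a].
Proof.
have D0E : [set a; ordS a; c; ordS c] = [set a] :|: [set ordS a; c; ordS c].
  by apply/setP => x; rewrite !inE !orbA.
split; rewrite ?D0E ?inE ?eqxx ?orbT //.
- rewrite imset_set1 pblock_a inE; apply/eqP => /setP /(_ b).
  by rewrite !inE eqxx -!val_eqE /= gtn_eqF // ltn_eqF.
- by move=> j /set1P ->; rewrite !inE !eqxx ?orbT.
rewrite imset_set1 cards1 expn1.
apply: leq_trans (card_restrict_setU card_fiber_le_C) _.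
apply: (@leq_trans (C * N)); first by rewrite leq_mul2l card_restrict1_le_N orbT.
by rewrite leq_pmulr // expn_gt0 B_gt0.
Qed.

Lemma partial_bound_step D U : partial_bound D U -> D != setT ->
  exists t j, t \notin D /\ partial_bound (t |: D) (j |: U).
Proof.
case=> aD cD bdU UD bound DnT.
have [j jbd jD] : exists2 j, j \notin [set b; d] & (j \in D) != (ordS j \in D).
  case: (pickP [pred j | (j \notin [set b; d]) && ((j \in D) != (ordS j \in D))]).
    by move=> j /andP []; exists j.
  move=> none; case/eqP: DnT; apply: (cyclic_arcs_full ab bc cd aD cD) => j jbd.
  by apply/eqP; move: (none j); rewrite /= jbd => /negbFE.
have [u [t [uD tD jtD sjtD edge]]] : exists u t,
    [/\ u \in D, t \notin D, j \in t |: D, ordS j \in t |: D &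
        forall f m, f \in S -> pblock P m = pblock P j ->
          (f m, f (ordS m)) ~ (f u, f t)].
  case: (boolP (j \in D)) jD => [jD' | jD'] /= sjD.
  - exists j, (ordS j); split; rewrite ?setU11 ?setU1r //.
    by move=> f m fS eq_mj; apply: E_set_sim.
  - exists (ordS j), j; rewrite negbK in sjD; split; rewrite ?setU11 ?setU1r //.
    move=> f m fS eq_mj.
    exact: (sim_trans _ _ _ (E_set_sim f m j fS eq_mj) (sim_swap _ _)).
exists t, j; split => //; split; rewrite ?setU1r //.
- rewrite imsetU1 in_setU1 negb_or bdU andbT; apply/negP => /eqP ebd.
  by move: jbd; rewrite ebd mem_pblock mem_cover_P.
- move=> i /setU1P [-> | iU]; first by rewrite jtD sjtD.
  by case/andP: (UD i iU) => iD siD; rewrite !setU1r.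
rewrite imsetU1 !cardsU1 tD setUC /=.
case: (boolP (pblock P j \in pblock P @: U)) => [/imsetP [m mU eq_jm] | new] /=.
- have /andP [mD smD] := UD m mU.
  have fiber_le f0 (f0S : f0 \in S) := card_fiber_le_B D u t m f0 f0S uD mD smD
    (fun f fS => edge f m fS (esym eq_jm)).
  apply: leq_trans (card_restrict_setU fiber_le) _.
  by rewrite expnS mulnCA leq_mul2l bound orbT.
- apply: leq_trans (card_restrict_setU (fun f0 _ => card_restrict1_le_N _ t)) _.
  apply: leq_trans (leq_mul (leqnn N) bound) _.
  rewrite !add1n !expnS !mulnA [N * C]mulnC -!mulnA !leq_mul2l.
  by rewrite leq_pmull ?orbT.
Qed.

Lemma partial_bound_setT D U : partial_bound D U -> exists U', partial_bound setT U'.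
Proof.
have [n] := ubnP #|~: D|; elim: n D U => [|n IH] D U; first by rewrite ltn0.
rewrite ltnS => Dn inv.
have [DT | DnT] := eqVneq D setT; first by rewrite DT in inv; exists U.
have [t [j [tD inv1]]] := partial_bound_step D U inv DnT.
apply: (IH _ _ _ inv1); apply: leq_trans Dn.
by apply: proper_card; rewrite properC properUr // sub1set.
Qed.

Lemma card_E_set_le : #|S| <= C * N ^ (#|P| - 1) * B ^ k.
Proof.
have [U [_ _ bdU _ bound]] := partial_bound_setT _ _ partial_bound_init.
have restrictT_inj : injective (@restrict 'I_k 'I_N setT).
  by move=> f g /restrict_eq_in eqfg; apply/ffunP => x; rewrite eqfg.
rewrite -(card_imset S restrictT_inj); apply: leq_trans bound _.
rewrite cardsT card_ord leq_mul // leq_mul // leq_pexp2l //.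
have sub : pblock P @: U \subset P :\ [set b; d].
  apply/subsetP => _ /imsetP [x xU ->]; rewrite !inE pblock_mem ?mem_cover_P // andbT.
  by apply: contraNneq bdU => <-; rewrite imset_f.
apply: leq_trans (subset_leq_card sub) _.
by rewrite (cardsD1 [set b; d] P) bdP add1n subn1.
Qed.

End CrossingBound.

Theorem mainTheorem7
  (sim : forall N : nat, pair_rel N)
  (Hequiv : forall N, is_equivalence (sim N))
  (Hswap : forall N (p q : 'I_N), sim N (p, q) (q, p))
  (HC1 : little_o (C1_count sim) (fun N => N ^ 2))
  (HC2 : exists B N0 : nat, forall N, N0 <= N ->
           forall p q r : 'I_N, C2_count sim p q r <= B)
  (HC3 : little_o (C3_count sim) (fun N => N ^ 2))
  (k : nat) (Hk : ~~ odd k)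
  (P : {set {set 'I_k}}) (HP : pair_partition P) (Hcross : crossing P) :
  little_o (fun N => #|E_set sim N P|) (fun N => N ^ (k./2 + 1)).
Proof.
move=> m; case: HC2 => B0 [N0 C2_le].
case: Hcross => a [b [c [d [ab bc cd acP bdP]]]].
have half_k : k./2 = #|P| by rewrite -[k in k./2](card_pair_partition HP) doubleK.
have P_gt0 : 0 < #|P| by rewrite card_gt0; apply/set0Pn; exists [set a; c].
pose B := maxn B0 1; have B_gt0 : 0 < B by rewrite leq_max orbT.
have [N1 C1_le] := HC1 (m.+1 * B ^ k).-1.
exists (maxn (maxn N0 N1) 1) => N; rewrite !geq_max => /andP [/andP [NN0 NN1] N_gt0].
have [_ _ sim_trans] := Hequiv N.
have C2_le_B p q r : C2_count sim p q r <= B := leq_trans (C2_le N NN0 p q r) (leq_maxl _ _).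
have := card_E_set_le sim N k B sim_trans (Hswap N) C2_le_B N_gt0 B_gt0 P HP.1
  a b c d ab bc cd acP bdP.
move=> /(leq_mul (leqnn m.+1)) /leq_trans; apply.
have := C1_le N NN1; rewrite prednK ?muln_gt0 ?expn_gt0 ?B_gt0 // => C_le.
rewrite half_k [_ * _ * B ^ k]mulnC !mulnA.
have -> : N ^ (#|P| + 1) = N ^ 2 * N ^ (#|P| - 1) by rewrite -expnD; congr (_ ^ _); lia.
exact: leq_mul C_le (leqnn _).
Qed.
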